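(* Let $(G,\precsim)$ be a compatible quasi-ordered abelian group and let $G^o$ be its set of o-type elements. Then $G^o$ is an initial segment of $G$ and a subgroup of $G$; in particular $(G^o,\precsim)$ is an ordered abelian group.
   Context: A compatible quasi-ordered abelian group is an abelian group $G$ with a total quasi-order $\precsim$ (reflexive, transitive, any two elements comparable) such that, writing $a\sim b$ for $a\precsim b\wedge b\precsim a$: $(Q_1)$ $x\sim0\Rightarrow x=0$; $(Q_2)$ $x\precsim y\wedge y\not\sim z\Rightarrow x+z\precsim y+z$, for all $x,y,z$. With $cl(g)$ the $\sim$-class of $g$, an element $g$ is o-type if $cl(g)=\{g\}$ and $g$ is not of order $2$. A set $S$ is an initial segment if $s\in S$, $a\precsim s$ imply $a\in S$. An ordered abelian group is a group with a total order $\le$ such that $x\le y\Rightarrow x+z\le y+z$. *)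

From HB Require Import structures.
From mathcomp Require Import all_boot all_order all_algebra.
Set Implicit Arguments. Unset Strict Implicit. Unset Printing Implicit Defensive.
Import GRing.Theory.
Local Open Scope ring_scope.

Definition qeq (G : zmodType) (le : G -> G -> Prop) (a b : G) : Prop :=
  le a b /\ le b a.

Definition cqoag (G : zmodType) (le : G -> G -> Prop) : Prop :=
  [/\ (forall x, le x x),
      (forall x y z, le x y -> le y z -> le x z),
      (forall x y, le x y \/ le y x),
      (forall x : G, qeq le x 0 -> x = 0)
    & (forall x y z : G, le x y -> ~ qeq le y z -> le (x + z) (y + z))].

Definition order_two (G : zmodType) (g : G) : Prop := g != 0 /\ g + g = 0.

Definition otype (G : zmodType) (le : G -> G -> Prop) (g : G) : Prop :=
  (forall h, qeq le h g <-> h = g) /\ ~ order_two g.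

Definition initial_segment (G : zmodType) (le : G -> G -> Prop) (S : G -> Prop) : Prop :=
  forall s a, S s -> le a s -> S a.

Definition is_subgroup (G : zmodType) (S : G -> Prop) : Prop :=
  [/\ S 0, (forall x y, S x -> S y -> S (x + y)) & (forall x, S x -> S (- x))].

(* (S, le) restricted is an ordered abelian group: le is a total order on S
   compatible with addition (S assumed to be a subgroup) *)
Definition ordered_on (G : zmodType) (le : G -> G -> Prop) (S : G -> Prop) : Prop :=
  [/\ (forall x, S x -> le x x),
      (forall x y z, S x -> S y -> S z -> le x y -> le y z -> le x z),
      (forall x y, S x -> S y -> le x y -> le y x -> x = y),
      (forall x y, S x -> S y -> le x y \/ le y x)
    & (forall x y z, S x -> S y -> S z -> le x y -> le (x + z) (y + z))].

From mathcomp Require Import all_boot all_order all_algebra.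
From Stdlib Require Import Classical.
Set Implicit Arguments. Unset Strict Implicit.
Import GRing.Theory.
Local Open Scope ring_scope.

(* The o-type elements are exactly [0] and the [g] with [g] not equivalent to
   [-g]: for such [g], (Q2) with [z = -g] turns [h ~ g] into [h - g ~ 0], so
   [cl(g) = {g}].  The other elements lie above [0] and form an upward closed
   set, which gives the initial-segment property; closure under addition
   follows because [x + y ~ -(x + y)] would force [x + y] below [-x].
   Compatibility with addition is (Q2) except when [y ~ z], i.e. [y = z];
   there a strict [x + y < y + y] would give [x = -2y] and [3y = 0],
   hence [x = y]. *)

Lemma qeq_sym (G : zmodType) (le : G -> G -> Prop) (a b : G) :
  qeq le a b -> qeq le b a.
Proof. by case. Qed.

Section OTypeElements.

Variables (G : zmodType) (le : G -> G -> Prop).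
Hypothesis cqoag_le : cqoag le.

Let qle_refl x : le x x. Proof. by case: cqoag_le. Qed.
Let qle_trans x y z : le x y -> le y z -> le x z.
Proof. by case: cqoag_le => _ ? _ _ _; eauto. Qed.
Let qle_total x y : le x y \/ le y x. Proof. by case: cqoag_le. Qed.
Let qeq0_eq0 x : qeq le x 0 -> x = 0.
Proof. by case: cqoag_le => _ _ _ Q1 _; apply: Q1. Qed.
Let qle_add x y z : le x y -> ~ qeq le y z -> le (x + z) (y + z).
Proof. by case: cqoag_le => _ _ _ _ Q2; apply: Q2. Qed.

Definition opp_separated (g : G) : Prop := g = 0 \/ ~ qeq le g (- g).

Lemma qeq_opp_separated_eq g h : ~ qeq le g (- g) -> qeq le h g -> h = g.
Proof.
move=> g_sep [hg gh]; apply/subr0_eq/qeq0_eq0; split.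
  by have := qle_add hg g_sep; rewrite subrr.
have h_sep : ~ qeq le h (- g).
  by case=> h_ng ng_h; apply: g_sep; split; [apply: qle_trans gh h_ng | apply: qle_trans ng_h hg].
by have := qle_add gh h_sep; rewrite subrr.
Qed.

Lemma opp_separated_class g h : opp_separated g -> qeq le h g -> h = g.
Proof. by case=> [->|]; [apply: qeq0_eq0 | apply: qeq_opp_separated_eq]. Qed.

Lemma otypeP g : otype le g <-> opp_separated g.
Proof.
split=> [[g_cl g_not2] | g_sep].
  apply: NNPP => /not_or_and [g_neq0 /NNPP g_gopp].
  have opp_g : - g = g by apply/g_cl; apply: qeq_sym.
  by apply: g_not2; split; [exact/eqP | rewrite -{1}opp_g addNr].
split=> [h|[g_neq0 g2]]; first by split=> [|->]; [apply: opp_separated_class|].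
have opp_g : g = - g by apply: (addrI g); rewrite g2 subrr.
case: g_sep => [g0|]; first by rewrite g0 eqxx in g_neq0.
by rewrite -opp_g; apply.
Qed.

Lemma opp_separatedN g : opp_separated g -> opp_separated (- g).
Proof.
case=> [->|g_sep]; first by left; rewrite oppr0.
by right; rewrite opprK => ng_g; apply: g_sep; apply: qeq_sym.
Qed.

Lemma qle0_opp_eq0 a : le a 0 -> le (- a) 0 -> a = 0.
Proof.
move=> a_le0 na_le0; apply: oppr_inj; rewrite oppr0; apply: qeq0_eq0.
have [|na_sep] := classic (qeq le 0 (- a)); first exact: qeq_sym.
by split=> //; have := qle_add a_le0 na_sep; rewrite subrr add0r.
Qed.

Lemma qeq_opp_ge0 a : qeq le a (- a) -> le 0 a.
Proof.
case=> a_na na_a; case: (qle_total 0 a) => // a_le0.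
by rewrite (qle0_opp_eq0 a_le0 (qle_trans na_a a_le0)).
Qed.

Lemma opp_separated_le g a : opp_separated g -> le a g -> opp_separated a.
Proof.
move=> g_sep a_g; apply: NNPP => /not_or_and [a_neq0 /NNPP a_na].
have ge0_a := qeq_opp_ge0 a_na.
have ge0_na := qle_trans ge0_a a_na.1.
have a_g_sep : ~ qeq le a g.
  move=> /(opp_separated_class g_sep) a_eq; rewrite a_eq in a_neq0 a_na.
  by case: g_sep.
have na_g_sep : ~ qeq le (- a) g.
  by case=> _ g_na; apply: a_g_sep; split; [|apply: qle_trans g_na a_na.2].
have g_le_ag : le g (a + g) by have := qle_add ge0_a a_g_sep; rewrite add0r.
have g_le_gna : le g (g - a).
  by have := qle_add ge0_na na_g_sep; rewrite add0r addrC.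
case: (classic (qeq le (a + g) (- a))) => [[ag_na _] | ag_sep].
  by apply: a_g_sep; split; [|apply: qle_trans g_le_ag (qle_trans ag_na a_na.2)].
have gna_le_g : le (g - a) g.
  by have := qle_add g_le_ag ag_sep; rewrite [a + g]addrC addrK.
have : g - a = g by apply: (opp_separated_class g_sep); split.
by move/eqP; rewrite -subr_eq0 addrC addKr oppr_eq0 => /eqP.
Qed.

Lemma opp_separatedD x y :
  opp_separated x -> opp_separated y -> opp_separated (x + y).
Proof.
move=> x_sep y_sep; apply: NNPP => s_nsep.
have ns_nsep : ~ opp_separated (- (x + y)).
  by move=> /opp_separatedN; rewrite opprK.
have x_le_ns : le x (- (x + y)).
  case: (qle_total x (- (x + y))) => // ns_x.
  by case: ns_nsep; apply: opp_separated_le ns_x.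
have ns_y : ~ qeq le (- (x + y)) y.
  by case=> ns_le_y _; apply: ns_nsep; apply: opp_separated_le ns_le_y.
have := qle_add x_le_ns ns_y; rewrite opprD addrNK => s_le_nx.
by apply: s_nsep; apply: opp_separated_le s_le_nx; apply: opp_separatedN.
Qed.

Lemma qle_add_self x y : opp_separated y -> le x y -> le (x + y) (y + y).
Proof.
move=> y_sep x_le_y.
have [y0|y_neq0] := classic (y = 0); first by move: x_le_y; rewrite y0 !addr0.
have y_ny : ~ qeq le y (- y) by case: y_sep => [/y_neq0 [] | y_ny].
apply: NNPP => not_le.
have yy_le_xy : le (y + y) (x + y) by case: (qle_total (x + y) (y + y)).
have xy_eq : x + y = - y.
  apply: (opp_separated_class (opp_separatedN y_sep)).
  apply: NNPP => xy_sep.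
  have := qle_add yy_le_xy xy_sep; rewrite !addrK => y_le_x.
  have x_eq : x = y by apply: (opp_separated_class y_sep); split.
  by apply: not_le; rewrite x_eq.
have x_eq : x = - y - y by rewrite -[LHS](addrK y) xy_eq.
have ny_y : ~ qeq le (- y) y by move=> ny_y; exact: y_ny (qeq_sym ny_y).
have y3_le0 : le (y + y + y) 0.
  have yy_le_ny : le (y + y) (- y) by rewrite -xy_eq.
  by have := qle_add yy_le_ny ny_y; rewrite addNr.
have ny3_le0 : le (- (y + y + y)) 0.
  have nyy_le_y : le (- y - y) y by rewrite -x_eq.
  by have := qle_add nyy_le_y y_ny; rewrite subrr !opprD.
have y3_eq0 := qle0_opp_eq0 y3_le0 ny3_le0.
apply: not_le; suff -> : x = y by [].
by rewrite x_eq -opprD; apply: (addIr (y + y)); rewrite addNr addrC y3_eq0.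
Qed.

Lemma otype_initial : initial_segment le (otype le).
Proof. by move=> s a /otypeP s_sep a_s; apply/otypeP/(opp_separated_le s_sep). Qed.

Lemma otype_subgroup : is_subgroup (otype le).
Proof.
split=> [|x y /otypeP x_sep /otypeP y_sep|x /otypeP x_sep]; apply/otypeP.
- by left.
- exact: opp_separatedD.
- exact: opp_separatedN.
Qed.

Lemma otype_ordered : ordered_on le (otype le).
Proof.
split=> [x _ | x y z _ _ _ | x y _ /otypeP y_sep x_y y_x | x y _ _ |].
- exact: qle_refl.
- exact: qle_trans.
- exact: opp_separated_class y_sep (conj x_y y_x).
- exact: qle_total.
move=> x y z _ /otypeP y_sep /otypeP z_sep x_le_y.
have [/(opp_separated_class z_sep) <- | y_z] := classic (qeq le y z).
  exact: qle_add_self.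
exact: qle_add.
Qed.

End OTypeElements.

Theorem mainTheorem6 (G : zmodType) (le : G -> G -> Prop) :
  cqoag le ->
  [/\ initial_segment le (otype le),
      is_subgroup (otype le)
    & ordered_on le (otype le)].
Proof.
move=> H; split; [exact: otype_initial | exact: otype_subgroup | exact: otype_ordered].
Qed.
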